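(* Let $\mathcal{P}_1=\{AABB,ABAB\}$ and $\mathcal{P}_2=\{AABB,ABBA\}$. For each $i\in\{1,2\}$ there are constants $0<c<C$ such that a.a.s. $c\,n^{1/2}\le z_{\mathcal{P}_i}(\mathbb{RM}^{(2)}_{n})\le C\,n^{1/2}$.
   Context: An ordered $2$-matching of size $n$ is a set of $n$ pairwise disjoint $2$-element subsets (edges) of the ordered set $[2n]$ covering it; $\mathbb{RM}^{(2)}_n$ is such a matching chosen uniformly at random. Matchings are written as words (each edge gets a letter, each vertex replaced by its edge's letter), and $AABB, ABAB, ABBA$ are the three $2$-patterns (ordered matchings of size 2). Two edges form a pattern if they induce a matching order-isomorphic to it. For a set $\mathcal P$ of patterns, a $\mathcal P$-clique is a matching all of whose pairs of edges form patterns in $\mathcal P$, and $z_{\mathcal P}(M)$ is the largest size of a $\mathcal P$-clique contained in $M$. ''A.a.s.'' means with probability tending to 1 as $n\to\infty$. *)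

From HB Require Import structures.
From mathcomp Require Import all_boot all_order all_algebra.
From mathcomp Require Import reals.
Set Implicit Arguments. Unset Strict Implicit. Unset Printing Implicit Defensive.
Import Order.TTheory GRing.Theory Num.Theory.

(* Vertex set [2n] is represented by 'I_(n.*2) (0-based, same order). *)
Definition vert (n : nat) := 'I_(n.*2).

(* An ordered 2-matching of size n, given by its fixed-point-free
   partner involution on [2n]. *)
Definition is_matching (n : nat) (M : {ffun vert n -> vert n}) : bool :=
  [forall x, (M x != x) && (M (M x) == x)].

Definition matchings (n : nat) : {set {ffun vert n -> vert n}} :=
  [set M | is_matching M].

Definition edges (n : nat) (M : {ffun vert n -> vert n}) : {set vert n * vert n} :=
  [set e | (M e.1 == e.2) && (e.1 < e.2)%N].

Inductive pattern := AABB | ABAB | ABBA.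
Definition pattern_eqb (p q : pattern) : bool :=
  match p, q with
  | AABB, AABB | ABAB, ABAB | ABBA, ABBA => true | _, _ => false end.
Lemma pattern_eqP : Equality.axiom pattern_eqb.
Proof. by case; case; constructor. Qed.
HB.instance Definition _ := hasDecEq.Build pattern pattern_eqP.

(* Pattern of (a,b),(c,d) with a < c (a<b, c<d). *)
Definition classify (a b c d : nat) : pattern :=
  if (b < c)%N then AABB else if (b < d)%N then ABAB else ABBA.

Definition pat_of (n : nat) (e f : vert n * vert n) : pattern :=
  if (e.1 < f.1)%N then classify e.1 e.2 f.1 f.2
  else classify f.1 f.2 e.1 e.2.

Definition is_clique (n : nat) (P : seq pattern) (M : {ffun vert n -> vert n})
  (S : {set vert n * vert n}) : bool :=
  (S \subset edges M) &&
  [forall e in S, forall f in S, (e != f) ==> (pat_of e f \in P)].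

Definition zP (n : nat) (P : seq pattern) (M : {ffun vert n -> vert n}) : nat :=
  \max_(S : {set vert n * vert n} | is_clique P M S) #|S|.

Definition P1 : seq pattern := [:: AABB; ABAB].
Definition P2 : seq pattern := [:: AABB; ABBA].

(* Probability that the uniform random matching RM_n satisfies Q. *)
Definition probRM (R : realType) (n : nat) (Q : pred {ffun vert n -> vert n}) : R :=
  (#|[set M in matchings n | Q M]|%:R / #|matchings n|%:R)%R.

From HB Require Import structures.
From mathcomp Require Import all_boot all_order all_algebra.
From mathcomp Require Import reals perm.
From mathcomp Require Import zify.
From mathcomp.algebra_tactics Require Import ring lra.
Import Order.TTheory GRing.Theory Num.Theory.
Set Implicit Arguments. Unset Strict Implicit. Unset Printing Implicit Defensive.

(* Upper bound: a fixed set of k disjoint edges lies in RM_n with probability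
   \prod_(i < k) 1 / (2n - 2i - 1), and a P1- or P2-clique is determined by its
   sets of left and right endpoints (they are paired in order for P1, like
   brackets for P2), so there are at most C(2n, k)^2 candidates; for k about
   12 sqrt n the expected number of k-cliques is at most 2^-k.
   Lower bound: nesting (ABBA) is a partial order on the edges whose chains are
   P2-cliques and whose antichains are P1-cliques, so by Mirsky's theorem
   n <= z_P1 * z_P2, and both upper bounds force both lower bounds. *)

Lemma leq_bin_exp2 m j : 'C(m, j) <= 2 ^ m.
Proof.
rewrite -[m in 'C(m, _)]card_ord -card_draws -[m in 2 ^ m]card_ord -cardsT -card_powerset.
by apply: subset_leq_card; apply/subsetP => A _; rewrite powersetE subsetT.
Qed.

Lemma leq_exp2rW m1 m2 e : m1 <= m2 -> m1 ^ e <= m2 ^ e.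
Proof. by move=> le_m; elim: e => // e IH; rewrite !expnS leq_mul. Qed.

Lemma expn_le_fact k : k ^ k <= 4 ^ k * k`!.
Proof.
have -> : k ^ k = \prod_(i < k) k by rewrite prod_nat_const card_ord.
apply: (@leq_trans (k.*2 ^_ k)).
  by rewrite ffact_prod; apply: leq_prod => i _; have := ltn_ord i; lia.
rewrite -bin_ffact leq_mul2r (leq_trans (leq_bin_exp2 _ _)) ?orbT //.
by rewrite -mul2n expnM.
Qed.

Lemma bin_sqr_le_prod n k : k.*2 <= n.+1 -> 128 * n <= k * k ->
  'C(n.*2, k) ^ 2 * 2 ^ k <= \prod_(i < k) (n.*2 - (i.*2).+1).
Proof.
move=> le_k_n le_n_kk.
have le_nk_prod : n ^ k <= \prod_(i < k) (n.*2 - (i.*2).+1).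
  rewrite -[k in n ^ k]card_ord -prod_nat_const.
  by apply: leq_prod => i _; have := ltn_ord i; lia.
apply: leq_trans le_nk_prod.
have le_bin : 'C(n.*2, k) * k`! <= 2 ^ k * n ^ k.
  by rewrite bin_ffact -expnMn mul2n ffact_prod -[k in _ ^ k]card_ord -prod_nat_const;
    apply: leq_prod => i _; apply: leq_subr.
have le_fact := expn_le_fact k.
have le_kk : (128 * n) ^ k <= k ^ k * k ^ k by rewrite -expnMn leq_exp2rW.
have powE b : (2 ^ b) ^ k = (2 ^ k) ^ b by rewrite -!expnM mulnC.
rewrite -[4]/(2 ^ 2) powE in le_fact; rewrite -[128]/(2 ^ 7) expnMn powE in le_kk.
set a := 2 ^ k in le_bin le_fact le_kk *; set F := k`! in le_bin le_fact *.
set C := 'C(n.*2, k) in le_bin *; set N := n ^ k in le_bin le_kk *.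
have a_gt0 : 0 < a by rewrite expn_gt0.
have F_gt0 : 0 < F by rewrite fact_gt0.
rewrite -(@leq_pmul2l (a ^ 4 * F ^ 2)) ?muln_gt0 ?expn_gt0 ?a_gt0 ?F_gt0 //.
apply: (@leq_trans ((a * N) ^ 2 * a ^ 5)).
  have -> : a ^ 4 * F ^ 2 * (C ^ 2 * a) = (C * F) ^ 2 * a ^ 5 by ring.
  by rewrite leq_mul2r leq_sqr le_bin orbT.
apply: (@leq_trans (k ^ k * k ^ k * N)).
  have -> : (a * N) ^ 2 * a ^ 5 = a ^ 7 * N * N by ring.
  by rewrite leq_mul2r le_kk orbT.
have -> : a ^ 4 * F ^ 2 * N = (a ^ 2 * F) * (a ^ 2 * F) * N by ring.
by rewrite leq_mul2r leq_mul ?orbT.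
Qed.

Lemma card_fibers (T U : finType) (A : {set T}) (g : T -> U) :
  #|A| = \sum_(u : U) #|[set x in A | g x == u]|.
Proof.
rewrite -sum1_card (partition_big g xpredT) //=; apply: eq_bigr => u _.
by rewrite -sum1_card; apply: eq_bigl => x; rewrite inE.
Qed.

Lemma card_bigcup_le (I T : finType) (P : pred I) (F : I -> {set T}) :
  #|\bigcup_(i | P i) F i| <= \sum_(i | P i) #|F i|.
Proof.
elim/big_rec2: _ => [|i m U _ le_U_m]; first by rewrite cards0.
by rewrite cardsU (leq_trans (leq_subr _ _)) ?leq_add2l.
Qed.

Lemma bigmax_attained (I : finType) (P : pred I) (F : I -> nat) i0 :
  P i0 -> exists2 i, P i & \max_(j | P j) F j = F i.
Proof.
by move=> Pi0; exists [arg max_(i > i0 | P i) F i]; [case: arg_maxnP | exact: bigmax_eq_arg].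
Qed.

Lemma eq_of_fst_agree (A B : finType) (S T : {set A * B}) :
  fst @: S = fst @: T ->
  (forall e f, e \in S -> f \in T -> e.1 = f.1 -> e.2 = f.2) -> S = T.
Proof.
move=> eq_fst agree; apply/setP => -[a b]; apply/idP/idP => inS.
- have /imsetP[f fT /= af] : a \in fst @: T by rewrite -eq_fst (imset_f fst inS).
  by move: fT af (agree _ _ inS fT af); case: f => c d fT /= -> ->.
- have /imsetP[e eS /= ae] : a \in fst @: S by rewrite eq_fst (imset_f fst inS).
  by move: eS ae (agree _ _ eS inS (esym ae)); case: e => c d eS /= -> <-.
Qed.

Lemma agree_of_descent (A B : finType) (mu : A -> nat) (S T : {set A * B}) :
  (forall e f, e \in S -> f \in T -> e.1 = f.1 -> e.2 != f.2 ->
     exists h g, [/\ h \in S, g \in T, h.1 = g.1, h.2 != g.2 & mu h.1 < mu e.1]) ->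
  forall e f, e \in S -> f \in T -> e.1 = f.1 -> e.2 = f.2.
Proof.
move=> descent e f; move: {2}(mu e.1).+1 (ltnSn (mu e.1)) => m.
elim: m e f => // m IH e f lt_m eS fT ef; apply/eqP/negPn/negP => /descent.
case/(_ eS fT ef) => h [g [hS gT hg /negP ne lt]].
by apply: ne; apply/eqP; apply: IH => //; lia.
Qed.

Section Matchings.
Variable n : nat.
Local Notation V := (vert n).
Local Notation FF := {ffun V -> V}.
Implicit Types (P : seq pattern) (M : FF) (e f g h : V * V) (S T : {set V * V}).

Lemma matching_involutive M : is_matching M -> (forall x, M x != x) /\ involutive M.
Proof. by move/forallP=> H; split=> x; have /andP[? /eqP] := H x. Qed.

Lemma in_edges M e : (e \in edges M) = (M e.1 == e.2) && (e.1 < e.2).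
Proof. by rewrite inE. Qed.

Definition share_vertex e f := [|| e.1 == f.1, e.1 == f.2, e.2 == f.1 | e.2 == f.2].

Lemma edges_share_vertex M e f : is_matching M -> e \in edges M -> f \in edges M ->
  share_vertex e f -> e = f.
Proof.
move=> /matching_involutive[_ MK]; rewrite !in_edges => /andP[/eqP Me lt_e] /andP[/eqP Mf lt_f].
case: e Me lt_e => a b /= Ma lt_ab; case: f Mf lt_f => c d /= Mc lt_cd.
have Mb : M b = a by rewrite -Ma MK.
have Md : M d = c by rewrite -Mc MK.
case/or4P=> /eqP /= eq_v.
- by rewrite -eq_v Ma in Mc; rewrite eq_v Mc.
- have eq_bc : b = c by rewrite -Ma eq_v Md.
  by move: lt_ab lt_cd; rewrite eq_v eq_bc; lia.
- have eq_ad : a = d by rewrite -Mb eq_v Mc.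
  by move: lt_ab lt_cd; rewrite eq_v eq_ad; lia.
- by rewrite -eq_v Mb in Md; rewrite eq_v Md.
Qed.

Lemma card_edges M : is_matching M -> #|edges M| = n.
Proof.
move=> Mm; have [Mx_neq MK] := matching_involutive Mm.
set L := [set x : V | x < M x].
have -> : edges M = (fun x => (x, M x)) @: L.
  apply/setP => -[a b]; rewrite in_edges /=; apply/idP/imsetP.
    by case/andP => /eqP <- ab; exists a; rewrite // inE.
  by case=> x; rewrite inE => xL [-> ->]; rewrite eqxx xL.
rewrite card_imset; last by move=> x y [].
have CL : ~: L = M @: L.
  apply/setP => y; rewrite !inE; apply/idP/imsetP.
    move=> yL; exists (M y); last by rewrite MK.
    rewrite inE MK ltn_neqAle leqNgt yL andbT.
    by apply: contra_neq (Mx_neq y) => /val_inj ->.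
  by case=> x; rewrite inE => xL ->; rewrite MK -leqNgt ltnW.
have := cardsC L; rewrite CL card_imset ?card_ord; last exact: (can_inj MK).
by rewrite addnn => /(congr1 half); rewrite !doubleK.
Qed.

Definition adjacent_matching : FF :=
  [ffun x : V => insubd x (if odd x then (x : nat).-1 else (x : nat).+1)].

Lemma adjacent_matching_val (x : V) :
  adjacent_matching x = (if odd x then (x : nat).-1 else (x : nat).+1) :> nat.
Proof.
rewrite ffunE val_insubd; case: ifP => // /negbT; rewrite -leqNgt.
have lt_x := ltn_ord x.
case: ifP => odd_x; first by move=> le; move: (leq_ltn_trans (leq_pred _) lt_x); rewrite ltnNge le.
move=> le; have x_last : (x : nat).+1 = n.*2 by apply/eqP; rewrite eqn_leq le lt_x.
by have := congr1 odd x_last; rewrite odd_double /= odd_x.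
Qed.

Lemma adjacent_matchingP : is_matching adjacent_matching.
Proof.
apply/forallP => x; rewrite -!(inj_eq val_inj) /= !adjacent_matching_val.
by case: (nat_of_ord x) => [|m] //=; case: (boolP (odd m)) => [odd_m | /negbTE odd_m] /=;
  rewrite ?odd_m /=; lia.
Qed.

Lemma card_matchings_gt0 : 0 < #|matchings n|.
Proof. by apply/card_gt0P; exists adjacent_matching; rewrite inE adjacent_matchingP. Qed.

Definition matchings_over S := [set M in matchings n | S \subset edges M].
Definition vertices S := fst @: S :|: snd @: S.

Lemma card_vertices S : #|vertices S| <= (#|S|).*2.
Proof.
rewrite cardsU -[(#|S|).*2]addnn (leq_trans (leq_subr _ _)) //.
by apply: leq_add; apply: leq_imset_card.
Qed.

Definition conj_tperm (b y : V) M : FF := [ffun x => tperm b y (M (tperm b y x))].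

Lemma conj_tpermK b y : involutive (conj_tperm b y).
Proof. by move=> M; apply/ffunP => x; rewrite !ffunE !tpermK. Qed.

Lemma conj_tperm_matching b y M : is_matching M -> is_matching (conj_tperm b y M).
Proof.
move=> /matching_involutive[Mx_neq MK]; apply/forallP => x; rewrite !ffunE !tpermK MK tpermK eqxx andbT.
by apply: contra_neq (Mx_neq (tperm b y x)) => /(congr1 (tperm b y)); rewrite tpermK.
Qed.

(* Swapping e.2 with a fresh vertex y moves the partner of e.1 to y, keeping
   the other edges of S. *)
Lemma card_matchings_overD1 S e : e \in S ->
  #|~: (e.1 |: vertices (S :\ e))| * #|matchings_over S| <= #|matchings_over (S :\ e)|.
Proof.
move=> eS; set W := e.1 |: vertices (S :\ e).
rewrite [X in _ <= X](card_fibers _ (fun M : FF => M e.1)).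
rewrite (bigID (mem W)) /= -sum_nat_const (leq_trans _ (leq_addl _ _)) //.
rewrite big_mkcond [X in _ <= X]big_mkcond /=; apply: leq_sum => y _.
rewrite inE; case: ifP => // yW.
rewrite -(card_imset _ (can_inj (conj_tpermK e.2 y))); apply: subset_leq_card.
apply/subsetP => _ /imsetP[M + ->]; rewrite !inE => /andP[Mm SM].
have eE : e \in edges M by apply: (subsetP SM).
have /andP[/eqP Me lt_e] : (M e.1 == e.2) && (e.1 < e.2) by rewrite -in_edges.
have y_e1 : y != e.1 by apply: contraNneq yW => ->; rewrite setU11.
have e2_e1 : e.2 != e.1 by rewrite neq_ltn lt_e orbT.
rewrite conj_tperm_matching //= ffunE (tpermD e2_e1 y_e1).
rewrite Me tpermL eqxx andbT.
apply/subsetP => f fS'; have /andP[f_neq_e fS] : (f != e) && (f \in S) by rewrite -in_setD1.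
have fE : f \in edges M by apply: (subsetP SM).
have fixed (v : V) : v \in [:: f.1; f.2] -> tperm e.2 y v = v.
  move=> vf; apply: tpermD.
    apply: contra_neq f_neq_e => /esym v_e2.
    apply: (edges_share_vertex Mm fE eE); rewrite /share_vertex -v_e2.
    by move: vf; rewrite mem_seq2 => /pred2P[] ->; rewrite eqxx ?orbT.
  apply: contraNneq yW => ->; rewrite !inE.
  by move: vf; rewrite mem_seq2 => /pred2P[] ->; rewrite ?(imset_f fst fS') ?(imset_f snd fS') !orbT.
move: fE; rewrite !in_edges ffunE => /andP[/eqP Mf ->]; rewrite andbT.
by rewrite !fixed ?Mf // mem_seq2 eqxx ?orbT.
Qed.

Lemma card_matchings_over S :
  #|matchings_over S| * \prod_(i < #|S|) (n.*2 - (i.*2).+1) <= #|matchings n|.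
Proof.
move cardS : #|S| => k; elim: k S cardS => [|k IH] S cardS.
  by rewrite big_ord0 muln1 subset_leq_card //; apply/subsetP => M; rewrite inE => /andP[].
have [e eS] : exists e, e \in S by apply/set0Pn; rewrite -card_gt0 cardS.
have cardS' : #|S :\ e| = k by move: cardS; rewrite (cardsD1 e) eS => -[].
apply: leq_trans (IH _ cardS').
rewrite big_ord_recr /= mulnA mulnAC leq_mul2r (leq_trans _ (card_matchings_overD1 eS)) ?orbT //.
rewrite mulnC leq_mul2r; apply/orP; right.
have := cardsC (e.1 |: vertices (S :\ e)); rewrite card_ord.
have := card_vertices (S :\ e); rewrite cardS' cardsU1.
by case: (_ \in _) => /=; lia.
Qed.

Lemma clique_subset P M S T : is_clique P M S -> T \subset S -> is_clique P M T.
Proof.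
move=> /andP[SE /forall_inP cS] TS; rewrite /is_clique (subset_trans TS SE) /=.
apply/forall_inP => e eT; apply/forall_inP => f fT.
by have /forall_inP := cS e (subsetP TS e eT); apply; apply: (subsetP TS).
Qed.

Lemma clique0 P M : is_clique P M set0.
Proof. by rewrite /is_clique sub0set; apply/forall_inP => e; rewrite inE. Qed.

Lemma zP_attained P M : exists2 S, is_clique P M S & zP P M = #|S|.
Proof. exact: bigmax_attained (clique0 P M). Qed.

Lemma zP_geq_clique P M k : k <= zP P M -> exists2 S, is_clique P M S & #|S| = k.
Proof.
have [S0 cS0 ->] := zP_attained P M; case/card_geqP => s [uniq_s s_k sS0].
exists [set x in s]; last by rewrite cardsE (card_uniqP uniq_s).
by apply: clique_subset cS0 _; apply/subsetP => x; rewrite inE; exact: sS0.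
Qed.

Definition realizable P S := [exists M in matchings n, is_clique P M S].
Definition cliques P k := [set S : {set V * V} | (#|S| == k) && realizable P S].

(* Union bound over the candidate cliques. *)
Lemma card_zP_geq P k :
  #|[set M in matchings n | k <= zP P M]| * \prod_(i < k) (n.*2 - (i.*2).+1)
  <= #|cliques P k| * #|matchings n|.
Proof.
have cover : [set M in matchings n | k <= zP P M] \subset
             \bigcup_(S in cliques P k) matchings_over S.
  apply/subsetP => M; rewrite inE => /andP[Mm /zP_geq_clique[S cS cardS]].
  apply/bigcupP; exists S; last by rewrite inE Mm; case/andP: cS.
  by rewrite inE cardS eqxx; apply/exists_inP; exists M.
apply: leq_trans (leq_mul (leq_trans (subset_leq_card cover) (card_bigcup_le _ _)) (leqnn _)) _.
rewrite big_distrl /= -sum_nat_const; apply: leq_sum => S.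
by rewrite inE => /andP[/eqP <- _]; apply: card_matchings_over.
Qed.

(** * Cliques are determined by their endpoints *)

Lemma pat_nested e f : e.1 < f.1 -> f.2 < e.2 -> f.1 < f.2 -> pat_of e f = ABBA.
Proof.
move=> lt1 lt2 ltf; rewrite /pat_of /classify lt1.
by rewrite !ltnNge !(ltnW (leq_ltn_trans _ lt2)) ?(ltnW ltf).
Qed.

Lemma pat_crossing e f : e.1 < f.1 -> f.1 < e.2 -> e.2 < f.2 -> pat_of e f = ABAB.
Proof. by move=> lt1 lt2 lt3; rewrite /pat_of /classify lt1 lt3 ltnNge (ltnW lt2). Qed.

Lemma realizable_props P S : realizable P S ->
  [/\ {in S, forall e, e.1 < e.2},
      {in S &, forall e f, share_vertex e f -> e = f}
    & {in S &, forall e f, e != f -> pat_of e f \in P}].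
Proof.
case/exists_inP => M; rewrite inE => Mm /andP[SE /forall_inP cS]; split.
- by move=> e /(subsetP SE); rewrite in_edges => /andP[].
- by move=> e f /(subsetP SE) eE /(subsetP SE) fE; apply: edges_share_vertex Mm eE fE.
- by move=> e f eS fS; have /forall_inP/(_ f fS)/implyP := cS e eS.
Qed.

Section SameEndpoints.
Variables (P : seq pattern) (S T : {set V * V}).
Hypotheses (rS : realizable P S) (rT : realizable P T).
Hypotheses (eq_fst : fst @: S = fst @: T) (eq_snd : snd @: S = snd @: T).

(* If [e] and [f] start together and [e] ends first, the edge [g] of [T] ending
   at [e.2] starts elsewhere; the edge [h] of [S] starting at [g.1] cannot end at
   [g.2] since [e] already does. *)
Lemma disagreement_witness e f : e \in S -> f \in T -> e.1 = f.1 -> e.2 < f.2 ->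
  exists g h, [/\ g \in T, g.2 = e.2, g.1 != e.1, h \in S & h.1 = g.1 /\ h.2 != g.2].
Proof.
move=> eS fT ef lt_ef; have [_ shareS _] := realizable_props rS.
have [_ shareT _] := realizable_props rT.
have /imsetP[g gT /esym ge] : e.2 \in snd @: T by rewrite -eq_snd imset_f.
have g1_e1 : g.1 != e.1.
  apply: contra_ltnN lt_ef => /eqP g1_e1.
  by rewrite -(shareT g f) ?ge // /share_vertex g1_e1 ef eqxx.
have /imsetP[h hS /esym hg] : g.1 \in fst @: S by rewrite eq_fst imset_f.
exists g, h; split=> //; split=> //; apply: contra_neq g1_e1 => hg2.
by rewrite -hg (shareS h e) // /share_vertex hg2 ge eqxx !orbT.
Qed.

Lemma P1_disagree_smaller e f : P = P1 -> e \in S -> f \in T -> e.1 = f.1 -> e.2 < f.2 ->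
  exists h g, [/\ h \in S, g \in T, h.1 = g.1, h.2 != g.2 & h.1 < e.1].
Proof.
move=> PE eS fT ef lt_ef.
have [g [h [gT ge g1_e1 hS [hg hg2]]]] := disagreement_witness eS fT ef lt_ef.
exists h, g; split=> //; rewrite hg; case: ltngtP g1_e1 => // [lt_eg _|/val_inj ->]; last by rewrite eqxx.
have [ordT _ patT] := realizable_props rT.
have f_g : f != g by apply: contra_ltnN lt_eg => /eqP <-; rewrite ef.
by have := patT f g fT gT f_g; rewrite PE pat_nested ?ordT // -?ef ?ge.
Qed.

Lemma P2_disagree_larger e f : P = P2 -> e \in S -> f \in T -> e.1 = f.1 -> e.2 < f.2 ->
  exists h g, [/\ h \in S, g \in T, h.1 = g.1, h.2 != g.2 & e.1 < h.1].
Proof.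
move=> PE eS fT ef lt_ef.
have [g [h [gT ge g1_e1 hS [hg hg2]]]] := disagreement_witness eS fT ef lt_ef.
exists h, g; split=> //; rewrite hg; case: ltngtP g1_e1 => // [lt_ge _|/val_inj ->]; last by rewrite eqxx.
have [ordS _ _] := realizable_props rS; have [_ _ patT] := realizable_props rT.
have g_f : g != f by apply: contra_ltnN lt_ge => /eqP ->; rewrite ef.
by have := patT g f gT fT g_f; rewrite PE pat_crossing // -?ef ?ge ?ordS.
Qed.

End SameEndpoints.

Lemma realizable_eq_of_descent P (mu : V -> nat) :
  (forall S T e f, realizable P S -> realizable P T ->
     fst @: S = fst @: T -> snd @: S = snd @: T ->
     e \in S -> f \in T -> e.1 = f.1 -> e.2 < f.2 ->
     exists h g, [/\ h \in S, g \in T, h.1 = g.1, h.2 != g.2 & mu h.1 < mu e.1]) ->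
  forall S T, realizable P S -> realizable P T ->
    fst @: S = fst @: T -> snd @: S = snd @: T -> S = T.
Proof.
move=> descent S T rS rT eq_fst eq_snd; apply: (eq_of_fst_agree eq_fst).
apply: (@agree_of_descent _ _ mu) => e f eS fT ef ne.
case: (ltngtP e.2 f.2) => [lt_ef|lt_ef|/val_inj eq_ef]; last by rewrite eq_ef eqxx in ne.
  exact: descent rS rT eq_fst eq_snd eS fT ef lt_ef.
have [g [h [gT hS gh gh2 lt]]] := descent _ _ _ _ rT rS (esym eq_fst) (esym eq_snd) fT eS (esym ef) lt_ef.
by exists h, g; rewrite eq_sym -gh ef; split.
Qed.

Lemma realizable_eq_of_endpoints P S T : P = P1 \/ P = P2 ->
  realizable P S -> realizable P T -> fst @: S = fst @: T -> snd @: S = snd @: T -> S = T.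
Proof.
case=> PE.
  apply: (realizable_eq_of_descent (mu := val)) => S' T' e f rS' rT' eq1 eq2.
  exact: P1_disagree_smaller rS' rT' eq1 eq2 e f PE.
apply: (realizable_eq_of_descent (mu := fun x => n.*2 - x)) => S' T' e f rS' rT' eq1 eq2 eS fT ef lt_ef.
have [h [g [hS gT hg hg2 lt_eh]]] := P2_disagree_larger rS' rT' eq1 eq2 PE eS fT ef lt_ef.
by exists h, g; split=> //; have := ltn_ord h.1; lia.
Qed.

Lemma card_cliques P k : P = P1 \/ P = P2 -> #|cliques P k| <= 'C(n.*2, k) ^ 2.
Proof.
move=> P12; set endpoints := fun S : {set V * V} => (fst @: S, snd @: S).
have inj : {in cliques P k &, injective endpoints}.
  move=> S T; rewrite !inE => /andP[_ rS] /andP[_ rT] [].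
  exact: realizable_eq_of_endpoints P12 rS rT.
have card_ksets : #|[set A : {set V} | #|A| == k]| = 'C(n.*2, k).
  by rewrite card_draws card_ord.
rewrite -(card_in_imset inj) expnS expn1 -card_ksets -cardsX.
apply: subset_leq_card; apply/subsetP => _ /imsetP[S + ->]; rewrite !inE => /andP[/eqP cardS rS].
have [_ shareS _] := realizable_props rS.
rewrite !card_in_imset ?cardS ?eqxx // => e f eS fS ef; apply: shareS => //;
  by rewrite /share_vertex ef eqxx ?orbT.
Qed.

(** * Nesting depth *)

Definition encloses e f := (e.1 <= f.1) && (f.2 <= e.2).
Definition nest_chain M e S :=
  [&& is_clique [:: ABBA] M S, e \in S & [forall f in S, encloses f e]].
Definition depth M e := \max_(S | nest_chain M e S) #|S|.

Lemma pat_enclosed M f g : is_matching M -> f \in edges M -> g \in edges M ->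
  f != g -> encloses f g -> pat_of f g = ABBA /\ pat_of g f = ABBA.
Proof.
move=> Mm fE gE f_g /andP[le1 le2].
have ltg : g.1 < g.2 by move: gE; rewrite in_edges => /andP[].
have lt1 : f.1 < g.1.
  rewrite ltn_neqAle le1 andbT; apply: contra_neq f_g => /val_inj eq1.
  by apply: edges_share_vertex Mm fE gE _; rewrite /share_vertex eq1 eqxx.
have lt2 : g.2 < f.2.
  rewrite ltn_neqAle le2 andbT; apply: contra_neq f_g => /val_inj eq2.
  by apply: edges_share_vertex Mm fE gE _; rewrite /share_vertex eq2 eqxx !orbT.
have fg := pat_nested lt1 lt2 ltg; split=> //.
by move: fg; rewrite /pat_of lt1 ltnNge (ltnW lt1).
Qed.

Lemma encloses_of_ABBA e f : pat_of e f = ABBA -> encloses e f \/ encloses f e.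
Proof.
rewrite /pat_of /classify /encloses; case: ifP => lt1; case: ifP => // lt2; case: ifP => // lt3 _.
  by left; rewrite ltnW // leqNgt lt3.
by right; rewrite leqNgt lt1 leqNgt lt3.
Qed.

Lemma nest_chain1 M e : e \in edges M -> nest_chain M e [set e].
Proof.
move=> eE; rewrite /nest_chain set11 /= /is_clique sub1set eE /=.
apply/andP; split; apply/forall_inP => f /set1P ->; last by rewrite /encloses !leqnn.
by apply/forall_inP => g /set1P ->; rewrite eqxx.
Qed.

Lemma depth_gt0 M e : e \in edges M -> 0 < depth M e.
Proof. by move=> eE; rewrite (leq_trans _ (leq_bigmax_cond _ (nest_chain1 eE))) ?cards1. Qed.

(* A longest chain ending at [o] extends by [g], which lies inside all of it. *)
Lemma depth_lt M o g : is_matching M -> o \in edges M -> g \in edges M -> o != g ->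
  encloses o g -> depth M o < depth M g.
Proof.
move=> Mm oE gE o_g og; rewrite {1}/depth.
have [S /and3P[/andP[SE /forall_inP cS] oS /forall_inP So] ->] :=
  bigmax_attained (fun S => #|S|) (nest_chain1 oE).
have Sg f : f \in S -> encloses f g.
  case/So/andP => le1 le2; case/andP: og => le1' le2'.
  by rewrite /encloses (leq_trans le1) ?(leq_trans le2').
have gS : g \notin S.
  apply: contra o_g => /So /andP[le_go _]; case/andP: og => le_og _.
  have eq1 : o.1 = g.1 by apply/val_inj/eqP; rewrite eqn_leq le_og le_go.
  by apply/eqP/(edges_share_vertex Mm oE gE); rewrite /share_vertex eq1 eqxx.
have chain_g : nest_chain M g (g |: S).
  rewrite /nest_chain setU11 /= /is_clique subUset sub1set gE SE /=; apply/andP; split.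
    apply/forall_inP => x /setU1P[-> | xS]; apply/forall_inP => y /setU1P[-> | yS];
      rewrite ?eqxx //; apply/implyP => x_y.
    - have y_g : y != g by rewrite eq_sym.
      by have [_ ->] := pat_enclosed Mm (subsetP SE y yS) gE y_g (Sg y yS).
    - by have [-> _] := pat_enclosed Mm (subsetP SE x xS) gE x_y (Sg x xS).
    - by have /forall_inP/(_ y yS)/implyP := cS x xS; apply.
  by apply/forall_inP => f /setU1P[-> | /Sg //]; rewrite /encloses !leqnn.
by apply: leq_trans (leq_bigmax_cond _ chain_g); rewrite cardsU1 gS.
Qed.

Lemma depth_le_zP2 M e : depth M e <= zP P2 M.
Proof.
apply/bigmax_leqP => S /and3P[/andP[SE /forall_inP cS] _ _]; apply: leq_bigmax_cond.
rewrite /is_clique SE; apply/forall_inP => f fS; apply/forall_inP => g gS.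
apply/implyP => f_g; have /forall_inP/(_ g gS)/implyP/(_ f_g) := cS f fS.
by rewrite inE => /eqP ->.
Qed.

(* Mirsky: the levels of [depth] are antichains for [encloses], i.e. P1-cliques. *)
Lemma card_edges_le_zP M : is_matching M -> #|edges M| <= zP P1 M * zP P2 M.
Proof.
move=> Mm; set z2 := zP P2 M.
have depthK e : (inord (depth M e) : 'I_z2.+1) = depth M e :> nat.
  by rewrite inordK // ltnS depth_le_zP2.
rewrite (card_fibers _ (fun e => inord (depth M e) : 'I_z2.+1)) big_ord_recl /=.
have -> : #|[set e in edges M | inord (depth M e) == ord0 :> 'I_z2.+1]| = 0.
  apply/eqP; rewrite cards_eq0; apply/eqP/setP => e; rewrite !inE.
  apply/negbTE/andP => -[eE]; rewrite -val_eqE /= depthK => /eqP depth0.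
  by have := @depth_gt0 M e; rewrite in_edges eE depth0 => /(_ isT).
have -> : zP P1 M * z2 = \sum_(j < z2) zP P1 M by rewrite sum_nat_const card_ord mulnC.
rewrite add0n; apply: leq_sum => j _.
apply: leq_bigmax_cond; rewrite /is_clique; apply/andP; split.
  by apply/subsetP => e; rewrite inE => /andP[].
apply/forall_inP => e; rewrite inE => /andP[eE /eqP ej].
apply/forall_inP => f; rewrite inE => /andP[fE /eqP fj]; apply/implyP => e_f.
have eq_depth : depth M e = depth M f by rewrite -depthK -(depthK f) ej fj.
case pef: (pat_of e f) => //; case: (encloses_of_ABBA pef) => enc.
  by move: (depth_lt Mm eE fE e_f enc); rewrite eq_depth ltnn.
by move: (depth_lt Mm fE eE (contra_neq esym e_f) enc); rewrite eq_depth ltnn.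
Qed.

Lemma card_zP_ge P k : P = P1 \/ P = P2 -> k.*2 <= n.+1 -> 128 * n <= k * k ->
  #|[set M in matchings n | k <= zP P M]| * 2 ^ k <= #|matchings n|.
Proof.
move=> P12 le_k_n le_n_kk; set B := #|_|.
have bin_gt0 : 0 < 'C(n.*2, k) ^ 2 by rewrite expn_gt0 bin_gt0; lia.
rewrite -(leq_pmul2r bin_gt0) (leq_trans _ (leq_mul (leqnn _) (card_cliques k P12))) //.
rewrite [X in _ <= X]mulnC (leq_trans _ (card_zP_geq P k)) // -/B -mulnA leq_mul2l.
by rewrite [2 ^ k * _]mulnC bin_sqr_le_prod ?orbT.
Qed.

Lemma card_zP_ge_sqrt P s : P = P1 \/ P = P2 -> 25 <= s -> s * s <= n < s.+1 * s.+1 ->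
  #|[set M in matchings n | 12 * s.+1 <= zP P M]| * n.+1 <= #|matchings n|.
Proof.
move=> P12 s_ge25 /andP[le_ss lt_ss].
have le_k_n : (12 * s.+1).*2 <= n.+1 by nia.
have le_n_kk : 128 * n <= 12 * s.+1 * (12 * s.+1) by nia.
apply: leq_trans (card_zP_ge P12 le_k_n le_n_kk); rewrite leq_mul2l.
apply/orP; right; apply: leq_trans lt_ss _.
apply: (@leq_trans (2 ^ s.+1 * 2 ^ s.+1)); first by rewrite leq_mul // ltnW // ltn_expl.
by rewrite -expnD leq_exp2l //; lia.
Qed.
End Matchings.

Local Open Scope ring_scope.

Lemma probRM_union_bound (R : realType) n (Q B1 B2 : pred {ffun vert n -> vert n}) m (eps : R) :
  (forall M, is_matching M -> ~~ B1 M -> ~~ B2 M -> Q M) ->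
  (#|[set M in matchings n | B1 M]| * m <= #|matchings n|)%N ->
  (#|[set M in matchings n | B2 M]| * m <= #|matchings n|)%N ->
  2 <= eps * m%:R -> 1 - eps <= probRM R Q.
Proof.
move=> cover le_B1 le_B2 le_2_eps.
set X := #|matchings n|; set G := #|[set M in matchings n | Q M]|.
set b1 := #|[set M in matchings n | B1 M]|; set b2 := #|[set M in matchings n | B2 M]|.
have le_X : (X <= G + b1 + b2)%N.
  set SG := [set M in matchings n | Q M].
  set S1 := [set M in matchings n | B1 M]; set S2 := [set M in matchings n | B2 M].
  apply: (@leq_trans #|SG :|: S1 :|: S2|).
    apply/subset_leq_card/subsetP => M; rewrite !inE => Mm.
    rewrite Mm /=; case: (boolP (B1 M)) => [_ | nB1]; first by rewrite orbT.
    by case: (boolP (B2 M)) => [_ | nB2]; rewrite ?orbT // !orbF cover.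
  by rewrite (leq_trans (leq_card_setU _ _)) // leq_add2r leq_card_setU.
have X_gt0 : (0 < X)%N := card_matchings_gt0 n.
rewrite /probRM ler_pdivlMr ?ltr0n // -/X -/G.
move: le_X le_B1 le_B2; rewrite -!(ler_nat R) !natrD !natrM => le_X le_B1 le_B2.
have [b_ge0 m_ge0] : (0 : R) <= b1%:R + b2%:R /\ (0 : R) <= m%:R by rewrite addr_ge0 ?ler0n.
have eps_ge0 : 0 <= eps by apply: contraTT le_2_eps; rewrite -!ltNge => eps_lt0; nra.
have : 2 * (b1%:R + b2%:R) <= eps * (2 * X%:R) :> R by nra.
lra.
Qed.

Lemma exists_nat_sqrt (R : realType) n :
  exists s, [/\ (s * s <= n)%N, (n < s.+1 * s.+1)%N & s%:R <= Num.sqrt (n%:R : R)].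
Proof.
have /andP[le_s_r lt_r_s] := truncn_itv (sqrtr_ge0 (n%:R : R)).
set r := Num.sqrt (n%:R : R) in le_s_r lt_r_s *; exists (Num.truncn r).
have r2 : r ^+ 2 = n%:R by rewrite sqr_sqrtr ?ler0n.
have s_ge0 : 0 <= (Num.truncn r)%:R :> R by rewrite ler0n.
have r_ge0 : 0 <= r := sqrtr_ge0 _.
by split=> //; [rewrite -(ler_nat R) | rewrite -(ltr_nat R)]; rewrite natrM -r2; nra.
Qed.

Lemma zP_window (R : realType) n (M : {ffun vert n -> vert n}) s P :
  is_matching M -> (11 <= s)%N -> s%:R <= Num.sqrt (n%:R : R) ->
  (zP P1 M < 12 * s.+1)%N -> (zP P2 M < 12 * s.+1)%N -> P = P1 \/ P = P2 ->
  (1 / 13 * Num.sqrt (n%:R : R) <= (zP P M)%:R) && ((zP P M)%:R <= 13 * Num.sqrt (n%:R : R)).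
Proof.
move=> Mm s_ge11 le_s_r lt_z1 lt_z2 P12; set r := Num.sqrt (n%:R : R).
have rr : r * r = n%:R by rewrite -expr2 sqr_sqrtr ?ler0n.
have n_le : n%:R <= (zP P1 M)%:R * (zP P2 M)%:R :> R.
  by rewrite -natrM ler_nat -{1}(card_edges Mm) card_edges_le_zP.
have z_le (z : nat) : (z < 12 * s.+1)%N -> z%:R <= 13 * r.
  move=> lt_z; apply: le_trans (_ : 13 * s%:R <= 13 * r); last by rewrite ler_pM2l.
  by rewrite -natrM ler_nat; lia.
have r_gt0 : 0 < r by apply: lt_le_trans le_s_r; rewrite ltr0n; lia.
have [z1_ge0 z2_ge0] : (0 : R) <= (zP P1 M)%:R /\ (0 : R) <= (zP P2 M)%:R by rewrite !ler0n.
have z1_le := z_le _ lt_z1; have z2_le := z_le _ lt_z2.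
have r_le1 : r <= 13 * (zP P1 M)%:R by rewrite -(ler_pM2r r_gt0); nra.
have r_le2 : r <= 13 * (zP P2 M)%:R by rewrite -(ler_pM2r r_gt0); nra.
by case: P12 => ->; apply/andP; split; lra.
Qed.

Theorem theorem1p1 :
  forall (P : seq pattern), P = P1 \/ P = P2 ->
  forall (R : realType),
  exists c C : R, (0 < c)%R /\ (c < C)%R /\
    (forall eps : R, (0 < eps)%R ->
      exists N : nat, forall n : nat, (N <= n)%N ->
        (1 - eps <= probRM R (fun M : {ffun vert n -> vert n} =>
            (c * Num.sqrt (n%:R) <= (zP P M)%:R)%R &&
            ((zP P M)%:R <= C * Num.sqrt (n%:R))%R))%R).
Proof.
move=> P P12 R; exists (1 / 13), 13; split; first lra; split; first lra.
move=> eps eps_gt0; exists (maxn 625 (Num.truncn (2 / eps)).+1) => n.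
rewrite geq_max => /andP[n_ge lt_eps_n].
have [s [le_ss lt_ss le_s_r]] := exists_nat_sqrt R n.
have s_ge25 : (25 <= s)%N by nia.
have sqrt_s : (s * s <= n < s.+1 * s.+1)%N by rewrite le_ss.
apply: (@probRM_union_bound R n _ (fun M => 12 * s.+1 <= zP P1 M)%N (fun M => 12 * s.+1 <= zP P2 M)%N n.+1).
- by move=> M Mm; rewrite -!ltnNge => lt_z1 lt_z2; apply: (zP_window (s := s)) => //; lia.
- exact: card_zP_ge_sqrt (or_introl erefl) s_ge25 sqrt_s.
- exact: card_zP_ge_sqrt (or_intror erefl) s_ge25 sqrt_s.
have := truncnS_gt (2 / eps); rewrite ltr_pdivrMr // => lt_2.
by apply: (ltW (lt_le_trans lt_2 _)); rewrite mulrC ler_pM2l // ler_nat ltnS ltnW.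
Qed.
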